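(* Let $\mathcal{C}$ and $\mathcal{E}$ be finite sets and $T_1,\dots,T_\ell$ be $|\mathcal{C}|\times|\mathcal{E}|$ matrices. Let $\{A_0=I,A_1,\dots,A_d\}$ be the basis of $\{0,1\}$-matrices of a commutative association scheme on $\mathcal{E}$, with primitive idempotents $E_0,\dots,E_d$ and eigenvalues $p_k(r)$ defined by $A_kE_r=p_k(r)E_r$, and suppose $T_i^\top T_j=\sum_{k=0}^d t_{ij}^kA_k$ for complex numbers $t_{ij}^k$ ($i,j\in[\ell]$). For $j\in[m]$ let $F_j=\sum_{i=1}^\ell f_{ij}T_i$ with $f_{ij}\in\mathbb{C}$, fix $s\in\{0,\dots,d\}$ and let $g:[m]\to[\ell]$. Then the following are equivalent: (i) for every $j\in[m]$ there is a non-zero constant $\alpha_j$ with $T_{g(j)}^\top F_j=\alpha_jE_s$, and $T_h^\top F_j=0$ for all $h<g(j)$; (ii) for every $j\in[m]$: $\sum_{i=1}^\ell f_{ij}t^k_{hi}=0$ for all $k\in\{0,\dots,d\}$ and all $h<g(j)$, and $\sum_{i=1}^\ell\sum_{k=0}^d f_{ij}t^k_{g(j),i}p_k(r)$ is non-zero for $r=s$ and zero for all $r\neq s$.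
   Context: $[m]=\{1,\dots,m\}$. Condition (i) is called the triangular criterion for $g$. *)

From HB Require Import structures.
From mathcomp Require Import all_boot all_order all_algebra.
From mathcomp Require Import algC.
Set Implicit Arguments. Unset Strict Implicit. Unset Printing Implicit Defensive.
Import Order.TTheory GRing.Theory Num.Theory.
Local Open Scope ring_scope.

(* Complex numbers are modelled by mathcomp's algebraic complex numbers algC.
   The finite set \mathcal{E} is identified with 'I_n, and the d+1 relations /
   idempotents are indexed by 'I_(d.+1). *)

Definition comm_assoc_scheme (n d : nat) (A : 'I_d.+1 -> 'M[algC]_n) : Prop :=
  A ord0 = 1%:M /\
  (forall k, A k != 0) /\
  (forall k (x y : 'I_n), A k x y = 0 \/ A k x y = 1) /\
  \sum_(k < d.+1) A k = const_mx 1 /\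
  (forall k, exists k', (A k)^T = A k') /\
  (forall i j, exists c : 'I_d.+1 -> algC,
      A i *m A j = \sum_(k < d.+1) c k *: A k) /\
  (forall i j, A i *m A j = A j *m A i).

(* E_0, ..., E_d are the primitive idempotents of the Bose-Mesner algebra
   spanned by A: nonzero, pairwise orthogonal idempotents in span(A)
   summing to the identity (d+1 of them, hence a basis). *)
Definition primitive_idempotents (n d : nat) (A E : 'I_d.+1 -> 'M[algC]_n) : Prop :=
  [/\ (forall r, E r != 0),
      (forall r r', E r *m E r' = if r == r' then E r else 0),
      \sum_(r < d.+1) E r = 1%:M &
      (forall r, exists c : 'I_d.+1 -> algC, E r = \sum_(k < d.+1) c k *: A k)].

From HB Require Import structures.
From mathcomp Require Import all_boot all_order all_algebra.
From mathcomp Require Import algC.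
Set Implicit Arguments.
Unset Strict Implicit.
Unset Printing Implicit Defensive.

Import Order.TTheory GRing.Theory Num.Theory.
Local Open Scope ring_scope.

(* Expanding T_h^T F_j in the basis A_k and then, through A_k = \sum_r p_k(r) E_r,
   in the basis of primitive idempotents, conditions (i) and (ii) become the same
   statements about coefficients: the A_k are linearly independent (they have
   disjoint nonempty supports), and a combination \sum_r b_r E_r of nonzero
   orthogonal idempotents is a nonzero multiple of E_s exactly when b_s is its
   only nonzero coefficient. *)

Section SchemeBasis.

Variables (R : numDomainType) (n d : nat) (A : 'I_d.+1 -> 'M[R]_n).
Hypothesis A_neq0 : forall k, A k != 0.
Hypothesis A_01 : forall k x y, A k x y = 0 \/ A k x y = 1.
Hypothesis sum_A : \sum_(k < d.+1) A k = const_mx 1.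

Lemma scheme_support_disjoint k k' x y :
  A k x y = 1 -> k' != k -> A k' x y = 0.
Proof.
move=> Akxy neq_k'k.
have A_ge0 i : 0 <= A i x y by case: (A_01 i x y) => ->.
have := congr1 (fun M : 'M[R]_n => M x y) sum_A.
rewrite /= summxE mxE (bigD1 k) //= Akxy -[RHS]addr0 => /addrI.
by move/(psumr_eq0P (fun i _ => A_ge0 i)); apply.
Qed.

Lemma scheme_comb_eq0 (a : 'I_d.+1 -> R) :
  \sum_(k < d.+1) a k *: A k = 0 <-> forall k, a k = 0.
Proof.
split=> [comb0 k|a0]; last by rewrite big1 // => k _; rewrite a0 scale0r.
have [x [y Akxy]] : exists x y, A k x y = 1.
  have : ~~ [forall x, forall y, A k x y == 0].
    apply: contra (A_neq0 k) => /forallP Ak0; apply/eqP/matrixP => x y.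
    by rewrite mxE; exact/eqP/(forallP (Ak0 x) y).
  case/forallPn=> x /forallPn[y /eqP Akxy_neq0]; exists x, y.
  by case: (A_01 k x y).
have := congr1 (fun M : 'M[R]_n => M x y) comb0.
rewrite /= summxE mxE (bigD1 k) //= mxE Akxy mulr1 big1 ?addr0 // => k' ?.
by rewrite mxE (scheme_support_disjoint Akxy) ?mulr0.
Qed.

End SchemeBasis.

Section OrthogonalIdempotents.

Variables (F : fieldType) (n d : nat) (E : 'I_d.+1 -> 'M[F]_n).
Hypothesis E_neq0 : forall r, E r != 0.
Hypothesis E_orth : forall r r', E r *m E r' = if r == r' then E r else 0.

Lemma sum_scale_idem_mulr (b : 'I_d.+1 -> F) r :
  (\sum_(r' < d.+1) b r' *: E r') *m E r = b r *: E r.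
Proof.
rewrite mulmx_suml (bigD1 r) //= big1 ?addr0 => [|r' neq_r'r].
  by rewrite -scalemxAl E_orth eqxx.
by rewrite -scalemxAl E_orth (negPf neq_r'r) scaler0.
Qed.

Lemma scale_idem_inj r : injective (fun a : F => a *: E r).
Proof.
move=> a a' /= /eqP; rewrite -subr_eq0 -scalerBl scaler_eq0 (negPf (E_neq0 r)).
by rewrite orbF subr_eq0 => /eqP.
Qed.

Lemma sum_scale_idem_single (b : 'I_d.+1 -> F) s :
  (exists a, a != 0 /\ \sum_(r < d.+1) b r *: E r = a *: E s) <->
  b s != 0 /\ (forall r, r != s -> b r = 0).
Proof.
split=> [[a [a_neq0 sum_eq]] | [bs_neq0 b0]].
  have coefE r : b r = if r == s then a else 0.
    apply: (@scale_idem_inj r); rewrite /= -sum_scale_idem_mulr sum_eq.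
    rewrite -scalemxAl E_orth eq_sym.
    by case: (r =P s) => [->|_]; rewrite ?scaler0 ?scale0r.
  by split=> [|r neq_rs]; rewrite coefE ?eqxx // (negPf neq_rs).
exists (b s); split=> //.
by rewrite (bigD1 s) //= big1 ?addr0 // => r ?; rewrite b0 ?scale0r.
Qed.

End OrthogonalIdempotents.

Section Expansions.

Variables (R : comRingType) (n d : nat) (A E : 'I_d.+1 -> 'M[R]_n).
Variable p : 'I_d.+1 -> 'I_d.+1 -> R.

Lemma scheme_comb_spectral (a : 'I_d.+1 -> R) :
  \sum_(r < d.+1) E r = 1%:M ->
  (forall k r, A k *m E r = p k r *: E r) ->
  \sum_(k < d.+1) a k *: A k =
  \sum_(r < d.+1) (\sum_(k < d.+1) a k * p k r) *: E r.
Proof.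
move=> sum_E AE; rewrite -[LHS]mulmx1 -sum_E mulmx_sumr; apply: eq_bigr => r _.
rewrite mulmx_suml scaler_suml; apply: eq_bigr => k _.
by rewrite -scalemxAl AE scalerA.
Qed.

Lemma gram_comb c l (T : 'I_l -> 'M[R]_(c, n)) (t : 'I_l -> 'I_l -> 'I_d.+1 -> R)
    (f : 'I_l -> R) h :
  (forall i j, (T i)^T *m T j = \sum_(k < d.+1) t i j k *: A k) ->
  (T h)^T *m (\sum_(i < l) f i *: T i) =
  \sum_(k < d.+1) (\sum_(i < l) f i * t h i k) *: A k.
Proof.
move=> TT; rewrite mulmx_sumr.
under eq_bigr do rewrite -scalemxAr TT scaler_sumr.
rewrite exchange_big; apply: eq_bigr => k _.
by rewrite scaler_suml; apply: eq_bigr => i _; rewrite scalerA.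
Qed.

End Expansions.

Theorem mainTheorem2 (c n d l m : nat)
  (T : 'I_l -> 'M[algC]_(c, n))
  (A E : 'I_d.+1 -> 'M[algC]_n) (p : 'I_d.+1 -> 'I_d.+1 -> algC)
  (t : 'I_l -> 'I_l -> 'I_d.+1 -> algC)
  (f : 'I_l -> 'I_m -> algC) (s : 'I_d.+1) (g : 'I_m -> 'I_l) :
  comm_assoc_scheme A ->
  primitive_idempotents A E ->
  (forall k r, A k *m E r = p k r *: E r) ->
  (forall i j, (T i)^T *m T j = \sum_(k < d.+1) t i j k *: A k) ->
  let F := fun j : 'I_m => \sum_(i < l) f i j *: T i in
  (forall j : 'I_m,
     (exists alpha : algC, alpha != 0 /\ (T (g j))^T *m F j = alpha *: E s) /\
     (forall h : 'I_l, (h < g j)%N -> (T h)^T *m F j = 0))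
  <->
  (forall j : 'I_m,
     (forall (k : 'I_d.+1) (h : 'I_l), (h < g j)%N ->
        \sum_(i < l) f i j * t h i k = 0) /\
     (\sum_(i < l) \sum_(k < d.+1) f i j * t (g j) i k * p k s != 0) /\
     (forall r : 'I_d.+1, r != s ->
        \sum_(i < l) \sum_(k < d.+1) f i j * t (g j) i k * p k r = 0)).
Proof.
move=> [_ [A_neq0 [A_01 [sum_A _]]]] [E_neq0 E_orth sum_E _] AE TT F.
have eigen_sum_exchange h j r :
    \sum_(i < l) \sum_(k < d.+1) f i j * t h i k * p k r =
    \sum_(k < d.+1) (\sum_(i < l) f i j * t h i k) * p k r.
  by rewrite exchange_big; apply: eq_bigr => k _; rewrite mulr_suml.
have spectralE h j : (T h)^T *m F j =
    \sum_(r < d.+1) (\sum_(i < l) \sum_(k < d.+1) f i j * t h i k * p k r) *: E r.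
  under eq_bigr do rewrite eigen_sum_exchange.
  by rewrite (gram_comb _ _ TT) (scheme_comb_spectral _ sum_E AE).
have lower_eq0 j h : (T h)^T *m F j = 0 <-> forall k, \sum_(i < l) f i j * t h i k = 0.
  by rewrite (gram_comb _ _ TT); exact: scheme_comb_eq0 A_neq0 A_01 sum_A _.
have leading j := sum_scale_idem_single E_neq0 E_orth
  (fun r => \sum_(i < l) \sum_(k < d.+1) f i j * t (g j) i k * p k r) s.
split=> H j; have [H1 H2] := H j.
- split; last by apply/leading; rewrite -spectralE.
  by move=> k h lt_h; apply/lower_eq0: k; exact: H2.
- split; first by rewrite spectralE; apply/leading.
  by move=> h lt_h; apply/lower_eq0 => k; exact: H1.
Qed.
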